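(* Let $B$ be a finite nonempty subset of $\mathbb{R}/\mathbb{Z}$ and let $C\subseteq B$ satisfy $C-B=B-B$. For $c\in C$ let $b_c^-$ and $b_c^+$ be the smaller and larger neighbours of $c$ in $B$, and let $R^-=\{c-b_c^-: c\in C\}$ and $R^+=\{c-b_c^+: c\in C\}$. Then every element of $B-B$ is a sum (in $\mathbb{R}/\mathbb{Z}$) of elements of $R^-$, and also a sum of elements of $R^+$; that is, $$B-B\subseteq\langle R^-\rangle_{\mathbb{N}_0}=\langle R^+\rangle_{\mathbb{N}_0}.$$
   Context: $X-Y=\{x-y: x\in X, y\in Y\}$. A finite subset of $\mathbb{R}/\mathbb{Z}$ is ordered circularly (anticlockwise around the circle); each point has a smaller neighbour (the point immediately before it) and a larger neighbour (the point immediately after it) in this circular order, where the first point is regarded as coming after the last. For a set $R\subseteq\mathbb{R}/\mathbb{Z}$, $\langle R\rangle_{\mathbb{N}_0}$ denotes the set of all finite sums $\sum_{r\in R} n_r r$ with $n_r\in\mathbb{N}_0=\{0,1,2,\dots\}$. *)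

(* R / Z is modelled by canonical representatives in [0,1):
   a point of R/Z is a real x with 0 <= x < 1, and the group operations are
   performed on representatives and reduced with [frac]. *)
From HB Require Import structures.
From mathcomp Require Import all_boot all_order all_algebra.
From mathcomp Require Import reals.
Set Implicit Arguments. Unset Strict Implicit. Unset Printing Implicit Defensive.
Import Order.TTheory GRing.Theory Num.Theory.
Local Open Scope ring_scope.

Section Circle.
Variable R : realType.

Definition frac (x : R) : R := x - (Num.floor x)%:~R.

Definition circle_set (B : seq R) : Prop :=
  uniq B /\ (forall b, b \in B -> 0 <= b < 1).

Definition csub (x y : R) : R := frac (x - y).

Definition diffset (X Y : seq R) (z : R) : Prop :=
  exists2 x, x \in X & exists2 y, y \in Y & z = csub x y.

Definition maxlist (s : seq R) : R := foldr Num.max (head 0 s) s.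
Definition minlist (s : seq R) : R := foldr Num.min (head 0 s) s.

Definition prev_nb (B : seq R) (c : R) : R :=
  let L := [seq b <- B | b < c] in
  if L is [::] then maxlist B else maxlist L.

Definition next_nb (B : seq R) (c : R) : R :=
  let L := [seq b <- B | c < b] in
  if L is [::] then minlist B else minlist L.

Definition nspan (Rs : seq R) (z : R) : Prop :=
  exists n : R -> nat, z = frac (\sum_(r <- undup Rs) (n r)%:R * r).

End Circle.

(** Write [z = c - y] with [c] in [C] and [y] in [B], which is possible since
    [C - B = B - B].  If [p] is the smaller neighbour of [c] in [B], then
    [z = (c - p) + (p - y)], where [c - p] lies in [R^-] and [p - y] is again
    in [B - B] but strictly smaller as a representative in [[0,1)], since [p]
    lies on the arc from [y] to [c].  As [B - B] is finite, descending along
    this order writes [z] as a sum of elements of [R^-].  Symmetrically the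
    larger neighbour [q] gives [z = (c - q) + (q - y)] with [q - y] strictly
    larger (or [0]), so [B - B] lies in the span of [R^+] as well.  Each span
    is then contained in the other, because [R^-] and [R^+] lie in [B - B]. *)

From HB Require Import structures.
From mathcomp Require Import all_boot all_order all_algebra.
From mathcomp Require Import reals.
From mathcomp Require Import ring lra.
Set Implicit Arguments. Unset Strict Implicit. Unset Printing Implicit Defensive.
Import Order.TTheory GRing.Theory Num.Theory.
Local Open Scope ring_scope.

Lemma count_lt_measure (R : numDomainType) (T : eqType) (f : T -> R)
    (s : seq T) a b :
  f a < f b -> a \in s ->
  (count (fun e => (f e < f a)%R) s < count (fun e => (f e < f b)%R) s)%N.
Proof.
move=> lt_ab; elim: s => [//|x s IH]; rewrite inE => /orP[/eqP <-|as_] /=.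
  rewrite ltxx lt_ab add0n add1n ltnS; apply: sub_count => e /= lt_ea.
  exact: lt_trans lt_ea lt_ab.
have := IH as_; case: (boolP (f x < f a)) => [lt_xa|_] /=.
  by rewrite (lt_trans lt_xa lt_ab).
by case: (f x < f b) => //= lt; rewrite add0n add1n ltnS ltnW.
Qed.

Lemma finite_descent (R : numDomainType) (T : eqType) (D : seq T)
    (f : T -> R) (P : T -> Prop) :
  (forall z, z \in D -> (forall w, w \in D -> f w < f z -> P w) -> P z) ->
  forall z, z \in D -> P z.
Proof.
move=> step.
suff descent k z : (count (fun w => (f w < f z)%R) D < k)%N -> z \in D -> P z.
  by move=> z; apply: descent.
elim: k z => [//|k IH] z lt_zk zD; apply: (step z zD) => w wD lt_wz.
apply: (IH w _ wD); rewrite ltnS in lt_zk.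
exact: leq_trans (count_lt_measure lt_wz wD) lt_zk.
Qed.

Section Frac.
Variable R : realType.
Implicit Types x y z : R.

Lemma frac_id x : 0 <= x < 1 -> frac x = x.
Proof. by move=> x01; rewrite /frac (@floor_def _ x 0) ?subr0 ?add0r. Qed.

Lemma frac_addz x (m : int) : frac (x + m%:~R) = frac x.
Proof. by rewrite /frac floorDrz ?intr_int // intrKfloor intrD; ring. Qed.

Lemma frac_neg x : -1 <= x < 0 -> frac x = x + 1.
Proof. by move=> x_neg; rewrite -(@frac_addz x 1) frac_id //; lra. Qed.

Lemma frac0 : frac 0 = 0 :> R.
Proof. by rewrite frac_id // lexx ltr01. Qed.

Lemma frac_addl x y : frac (frac x + y) = frac (x + y).
Proof.
by rewrite -(frac_addz _ (Num.floor x)) /frac; congr frac; ring.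
Qed.

Lemma frac_addr x y : frac (x + frac y) = frac (x + y).
Proof. by rewrite addrC frac_addl addrC. Qed.

Lemma csubE x y : 0 <= x < 1 -> 0 <= y < 1 ->
  csub x y = if x < y then x - y + 1 else x - y.
Proof.
move=> /andP[x0 x1] /andP[y0 y1]; rewrite /csub.
case: ltP => xy /=; first by rewrite frac_neg //; lra.
by rewrite frac_id //; lra.
Qed.

Lemma csubxx x : csub x x = 0.
Proof. by rewrite /csub subrr frac0. Qed.

Lemma csub_chain x y z : csub x z = frac (csub y z + csub x y).
Proof. by rewrite /csub frac_addl frac_addr; congr frac; ring. Qed.

Lemma diffsetP (X Y : seq R) z :
  diffset X Y z <-> z \in [seq csub x y | x <- X, y <- Y].
Proof.
split=> [[x xX [y yY ->]]|/allpairsP[[x y] /= [xX yY ->]]].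
  by apply/allpairsP; exists (x, y).
by exists x => //; exists y.
Qed.

End Frac.

Section Neighbours.
Variable R : realType.
Implicit Types (s B : seq R) (c : R).

Lemma maxlist_spec s : s != [::] ->
  maxlist s \in s /\ forall x, x \in s -> x <= maxlist s.
Proof.
case: s => [//|a s] _; rewrite /maxlist /=.
suff [m_in le_am le_sm] : [/\ foldr Num.max a s \in a :: s, a <= foldr Num.max a s
                            & forall x, x \in s -> x <= foldr Num.max a s].
  by rewrite (max_idPr le_am); split=> // x; rewrite inE => /predU1P[->|/le_sm].
elim: s => [|b s [m_in le_am le_sm]] /=; first by rewrite mem_seq1 lexx.
split; first by case: leP => _; rewrite !inE ?eqxx ?orbT //;
  move: m_in; rewrite inE => /orP[]->; rewrite ?orbT.
  by rewrite le_max le_am orbT.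
by move=> x; rewrite inE le_max => /predU1P[->|/le_sm->]; rewrite ?lexx ?orbT.
Qed.

Lemma minlist_spec s : s != [::] ->
  minlist s \in s /\ forall x, x \in s -> minlist s <= x.
Proof.
case: s => [//|a s] _; rewrite /minlist /=.
suff [m_in le_ma le_ms] : [/\ foldr Num.min a s \in a :: s, foldr Num.min a s <= a
                            & forall x, x \in s -> foldr Num.min a s <= x].
  by rewrite (min_idPr le_ma); split=> // x; rewrite inE => /predU1P[->|/le_ms].
elim: s => [|b s [m_in le_ma le_ms]] /=; first by rewrite mem_seq1 lexx.
split; first by case: leP => _; rewrite !inE ?eqxx ?orbT //;
  move: m_in; rewrite inE => /orP[]->; rewrite ?orbT.
  by rewrite ge_min le_ma orbT.
by move=> x; rewrite inE ge_min => /predU1P[->|/le_ms->]; rewrite ?lexx ?orbT.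
Qed.

Lemma prev_nb_spec B c : B != [::] ->
  let p := prev_nb B c in
  [/\ p \in B, forall b, b \in B -> b < c -> b <= p
    & p < c \/ forall b, b \in B -> c <= b <= p].
Proof.
move=> B0 p; rewrite /p /prev_nb.
case E: [seq b <- B | b < c] => [|a l].
  have [p_in le_Bp] := maxlist_spec B0; split => // [b bB bc|].
    suff: b \in [seq b <- B | b < c] by rewrite E.
    by rewrite mem_filter bc.
  right=> b bB; rewrite le_Bp // andbT leNgt.
  apply/negP => bc; suff: b \in [seq b <- B | b < c] by rewrite E.
  by rewrite mem_filter bc.
have L0 : [seq b <- B | b < c] != [::] by rewrite E.
rewrite -E; have [+ le_Lp] := maxlist_spec L0; rewrite mem_filter => /andP[pc p_in].
by split; [|move=> b bB bc; apply: le_Lp; rewrite mem_filter bc|left].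
Qed.

Lemma next_nb_spec B c : B != [::] ->
  let q := next_nb B c in
  [/\ q \in B, forall b, b \in B -> c < b -> q <= b
    & c < q \/ forall b, b \in B -> q <= b <= c].
Proof.
move=> B0 q; rewrite /q /next_nb.
case E: [seq b <- B | c < b] => [|a l].
  have [q_in le_qB] := minlist_spec B0; split => // [b bB cb|].
    suff: b \in [seq b <- B | c < b] by rewrite E.
    by rewrite mem_filter cb.
  right=> b bB; rewrite le_qB //= leNgt.
  apply/negP => cb; suff: b \in [seq b <- B | c < b] by rewrite E.
  by rewrite mem_filter cb.
have L0 : [seq b <- B | c < b] != [::] by rewrite E.
rewrite -E; have [+ le_qL] := minlist_spec L0; rewrite mem_filter => /andP[cq q_in].
by split; [|move=> b bB cb; apply: le_qL; rewrite mem_filter cb|left].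
Qed.

End Neighbours.

Section Span.
Variable R : realType.
Implicit Types (S T : seq R) (r z : R).

Lemma nspan0 S : nspan S 0.
Proof. by exists (fun=> 0%N); rewrite big1 ?frac0 // => r _; rewrite mul0r. Qed.

Lemma nspan_add S a b : nspan S a -> nspan S b -> nspan S (frac (a + b)).
Proof.
move=> [na ->] [nb ->]; exists (fun r => (na r + nb r)%N).
rewrite frac_addl frac_addr -big_split; congr frac.
by apply: eq_bigr => r _; rewrite natrD mulrDl.
Qed.

Lemma nspan_add_gen S r z : r \in S -> nspan S z -> nspan S (frac (z + r)).
Proof.
move=> rS [n ->]; exists (fun x => (n x + (x == r))%N); rewrite frac_addl.
congr frac; under [RHS]eq_bigr => x _ do rewrite natrD mulrDl.
rewrite big_split /=; congr (_ + _).
rewrite (bigD1_seq r) ?mem_undup ?undup_uniq //= eqxx mul1r big1 ?addr0 //.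
by move=> x /negPf ->; rewrite mul0r.
Qed.

Lemma nspan_mul S a k : nspan S a -> nspan S (frac (k%:R * a)).
Proof.
move=> Sa; elim: k => [|k IH]; first by rewrite mul0r frac0; apply: nspan0.
by rewrite -addn1 natrD mulrDl mul1r -frac_addl; apply: nspan_add.
Qed.

Lemma nspan_trans S T z :
  (forall r, r \in S -> nspan T r) -> nspan S z -> nspan T z.
Proof.
move=> ST [n ->]; have: {subset undup S <= S} by move=> r; rewrite mem_undup.
elim: (undup S) => [|x s IH] sS; first by rewrite big_nil frac0; apply: nspan0.
rewrite big_cons -frac_addl -frac_addr; apply: nspan_add.
  by apply/nspan_mul/ST/sS; rewrite inE eqxx.
by apply: IH => r rs; apply: sS; rewrite inE rs orbT.
Qed.

End Span.

Section Generation.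
Variables (R : realType) (B C : seq R).
Hypothesis B_circle : circle_set B.
Hypothesis B0 : B != [::].
Hypothesis CB : {subset C <= B}.
Hypothesis CB_BB : forall z, diffset C B z <-> diffset B B z.

Let B01 b : b \in B -> 0 <= b < 1.
Proof. by case: B_circle => _; apply. Qed.

Let Rm := [seq csub c (prev_nb B c) | c <- C].
Let Rp := [seq csub c (next_nb B c) | c <- C].

(* [csub x y] is the length of the anticlockwise arc from [y] to [x]; the
   smaller neighbour of [c] lies on the arc from [y] to [c]. *)
Lemma csub_prev_lt c y : c \in B -> y \in B -> c != y ->
  csub (prev_nb B c) y < csub c y.
Proof.
move=> cB yB cy; have [pB le_p p_wrap] := prev_nb_spec c B0.
set p := prev_nb B c in pB le_p p_wrap *.
move: (B01 cB) (B01 yB) (B01 pB) => c01 y01 p01; rewrite !csubE //.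
move: c01 y01 p01 => /andP[? ?] /andP[? ?] /andP[? ?].
case: (ltgtP c y) cy => // [cy|yc] _; case: (ltP p y) => py.
all: try have ? := le_p y yB yc.
all: by case: p_wrap => [pc|/(_ y yB)/andP[? ?]]; lra.
Qed.

Lemma csub_next_gt c y : c \in B -> y \in B -> c != y -> next_nb B c != y ->
  csub c y < csub (next_nb B c) y.
Proof.
move=> cB yB cy qy; have [qB le_q q_wrap] := next_nb_spec c B0.
set q := next_nb B c in qB le_q q_wrap qy *.
move: (B01 cB) (B01 yB) (B01 qB) => c01 y01 q01; rewrite !csubE //.
move: c01 y01 q01 => /andP[? ?] /andP[? ?] /andP[? ?].
case: (ltgtP c y) cy => // [cy|yc] _; case: (ltgtP q y) qy => // qy _.
all: try have ? := le_q y yB cy.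
all: by case: q_wrap => [cq|/(_ y yB)/andP[? ?]]; lra.
Qed.

Lemma diffset_nspan_prev z : diffset B B z -> nspan Rm z.
Proof.
move/diffsetP; move: z; apply: (finite_descent (f := id)) => z zBB IH.
have [c cC [y yB zE]] := (CB_BB z).2 ((diffsetP _ _ _).2 zBB); subst z.
have cB := CB cC; have [<-|cy] := eqVneq c y; first by rewrite csubxx; apply: nspan0.
have [pB _ _] := prev_nb_spec c B0.
rewrite (csub_chain _ (prev_nb B c)); apply: nspan_add_gen; first exact: map_f.
apply: IH (csub_prev_lt cB yB cy).
by apply/diffsetP; exists (prev_nb B c) => //; exists y.
Qed.

Lemma diffset_nspan_next z : diffset B B z -> nspan Rp z.
Proof.
move/diffsetP; move: z; apply: (finite_descent (f := -%R)) => z zBB IH.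
have [c cC [y yB zE]] := (CB_BB z).2 ((diffsetP _ _ _).2 zBB); subst z.
have cB := CB cC; have [<-|cy] := eqVneq c y; first by rewrite csubxx; apply: nspan0.
have [qB _ _] := next_nb_spec c B0.
rewrite (csub_chain _ (next_nb B c)); apply: nspan_add_gen; first exact: map_f.
have [->|qy] := eqVneq (next_nb B c) y; first by rewrite csubxx; apply: nspan0.
apply: IH; last by rewrite ltrN2 csub_next_gt.
by apply/diffsetP; exists (next_nb B c) => //; exists y.
Qed.

End Generation.

Theorem theorem2 (R : realType) (B C : seq R) :
  circle_set B -> B != [::] ->
  {subset C <= B} ->
  (forall z : R, diffset C B z <-> diffset B B z) ->
  let Rm := [seq csub c (prev_nb B c) | c <- C] in
  let Rp := [seq csub c (next_nb B c) | c <- C] in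
  (forall z : R, diffset B B z -> nspan Rm z) /\
  (forall z : R, diffset B B z -> nspan Rp z) /\
  (forall z : R, nspan Rm z <-> nspan Rp z).
Proof.
move=> B_circle B0 CB CB_BB Rm Rp.
have spanRm := diffset_nspan_prev B_circle B0 CB CB_BB.
have spanRp := diffset_nspan_next B_circle B0 CB CB_BB.
split=> //; split=> // z; split; apply: nspan_trans => _ /mapP[c cC ->].
- apply: spanRp; exists c; first exact: CB.
  by exists (prev_nb B c); first by case: (prev_nb_spec c B0).
- apply: spanRm; exists c; first exact: CB.
  by exists (next_nb B c); first by case: (next_nb_spec c B0).
Qed.
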